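(* Let $\lambda_1,\dots,\lambda_k$ be complex numbers and let $S_1,\dots,S_k$ be invertible elements of $B$. Put $$P:=(a-\lambda_1b)S_1(a-\lambda_2b)S_2\cdots(a-\lambda_kb)S_k\in B[a].$$ Then for every $X\in\tilde{\mathcal{A}}_{conv.}$ there exist a unique $Q\in\tilde{\mathcal{A}}_{conv.}$ and a unique $R\in B[a]$ with $\deg_a(R)\le k-1$ such that $X=QP+R$.
   Context: Let $\mathcal{A}_0$ be the $\mathbb{C}$-algebra of polynomials in two variables $a,b$ subject to the commutation relation $ab-ba=b^2$ (realized e.g. as operators on $\mathbb{C}[s]$, $a$ = multiplication by $s$, $b$ = primitive vanishing at $0$). Let $\widehat{\mathcal{A}}$ be its completion for the $(a,b)$-adic topology: the algebra of formal power series $\sum_{p,q\ge0}\gamma_{p,q}a^pb^q$ (equivalently, uniquely, $\sum\delta_{p,q}b^qa^p$), with product extending that of $\mathcal{A}_0$ continuously. Let $\tilde{\mathcal{A}}_{conv.}\subset\widehat{\mathcal{A}}$ be the subalgebra of series $\sum\gamma_{p,q}a^pb^q$ for which there exist $R>1$ and $C_R>0$ with $|\gamma_{p,q}|\le C_RR^{p+q}q!$ for all $p,q$. Let $B=\mathbb{C}\{\{b\}\}\subset\tilde{\mathcal{A}}_{conv.}$ be the subalgebra of series $\sum_q c_qb^q$ with $|c_q|\le CR^qq!$ for some $C,R$ (the Gevrey series in $b$). $B[a]\subset\tilde{\mathcal{A}}_{conv.}$ denotes the subalgebra of polynomials $\sum_{j=0}^dS_j(b)a^j$, $S_j\in B$,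 in which $aS(b)-S(b)a=b^2S'(b)$; $\deg_a$ is the degree in $a$ of such an expression. *)

From mathcomp Require Import all_boot all_algebra.
From mathcomp Require Import reals Rstruct complex.
Set Implicit Arguments. Unset Strict Implicit. Unset Printing Implicit Defensive.
Import GRing.Theory Num.Theory.
Local Open Scope ring_scope.

Definition CC : Type := complex Rdefinitions.R.

(* An element of the completion \hat A : the formal series
   sum_{p,q} X p q * a^p b^q  (normal ordering: powers of a on the left). *)
Definition ser := nat -> nat -> CC.

(* Ncoef r q i j = coefficient of a^i b^j in the normal form of b^q a^r,
   computed from  (a^i b^j) a = a^(i+1) b^j - j a^i b^(j+1),
   which follows from the relation ab - ba = b^2. *)
Fixpoint Ncoef (r q i j : nat) : CC :=
  match r with
  | 0 => ((i == 0%N) && (j == q))%:R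
  | r'.+1 =>
      (if i is i'.+1 then Ncoef r' q i' j else 0)
      - (if j is j'.+1 then j'%:R * Ncoef r' q i j' else 0)
  end.

(* the (continuous extension of the) product of A_0:
   coefficient of a^m b^n in X*Y is the (finite) sum over p<=m, s<=n, q,r with
   p+q+r+s = m+n of X p q * Y r s * [a^(m-p) b^(n-s)](b^q a^r). *)
Definition smul (X Y : ser) : ser := fun m n =>
  \sum_(p < m.+1) \sum_(s < n.+1) \sum_(q < (m + n - p - s).+1)
    X p q * Y (m + n - p - s - q)%N s * Ncoef (m + n - p - s - q) q (m - p) (n - s).

Definition sadd (X Y : ser) : ser := fun p q => X p q + Y p q.

Definition sone : ser := fun p q => ((p == 0%N) && (q == 0%N))%:R.

Definition sapow (j : nat) : ser := fun p q => ((p == j) && (q == 0%N))%:R.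

Definition slin (lam : CC) : ser := fun p q =>
  if (p == 1%N) && (q == 0%N) then 1
  else if (p == 0%N) && (q == 1%N) then - lam else 0.

Definition Aconv (X : ser) : Prop :=
  exists (rho c : Rdefinitions.R), 1 < rho /\ 0 < c /\
    forall p q, `|X p q| <= (c * rho ^+ (p + q) * (q`!)%:R)%:C%C.

Definition inB (S : ser) : Prop :=
  (forall p q, (0 < p)%N -> S p q = 0) /\
  exists (c rho : Rdefinitions.R), forall q, `|S 0%N q| <= (c * rho ^+ q * (q`!)%:R)%:C%C.

Definition invB (S : ser) : Prop :=
  inB S /\ exists T, inB T /\ smul S T = sone /\ smul T S = sone.

Definition BaDegLt (k : nat) (R : ser) : Prop :=
  exists Sj : nat -> ser, (forall j, (j < k)%N -> inB (Sj j)) /\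
    R = (fun p q => \sum_(j < k) smul (Sj j) (sapow j) p q).

Fixpoint Pprod (lam : nat -> CC) (S : nat -> ser) (k : nat) : ser :=
  match k with
  | 0 => sone
  | k'.+1 => smul (Pprod lam S k') (smul (slin (lam k')) (S k'))
  end.

From mathcomp Require Import all_boot all_order all_algebra.
From mathcomp Require Import reals Rstruct complex.
From mathcomp Require Import zify ring lra.
From Stdlib Require Import FunctionalExtensionality.

(* Right multiplication by a and by b acts on coefficient arrays by explicit
   shift operators, and X Y is the sum of the Y_{rs} X a^r b^s; this gives
   associativity and, for V in B, the commutation rule
   (a - lam b) V = V a + (b^2 V' - lam b V).
   Dividing X by a - lam b, with a remainder in B, is a triangular system in
   the coefficients, solved by a recursion on the b-degree; along it the bound
   C R^(p+q) q! only gets multiplied by (|lam| + 2)^q.  Writing X = (X S_k^-1) S_k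
   and inducting on k gives existence; the commutation rule keeps the remainder
   in B[a] with a-degree < k.  For uniqueness, if Y (a - lam b) vanishes in
   a-degrees >= k + 1 then Y vanishes in a-degrees >= k, and multiplying by an
   element of B does not increase the a-degree, so Q P of a-degree < k forces
   Q = 0. *)

Set Implicit Arguments.
Unset Strict Implicit.
Unset Printing Implicit Defensive.
Import Order.TTheory GRing.Theory Num.Theory.
Local Open Scope ring_scope.

Local Notation RR := Rdefinitions.R.

(** * The product as right multiplication *)

Lemma ser_ext (X Y : ser) : (forall m n, X m n = Y m n) -> X = Y.
Proof.
by move=> E; apply: functional_extensionality => m; apply: functional_extensionality.
Qed.

Definition szero : ser := fun _ _ => 0.

Definition ssub (X Y : ser) : ser := fun m n => X m n - Y m n.

(* [mula X], [mulb X] and [mulab r s X] are the coefficient arrays of X a, X b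
   and X a^r b^s; [mula] comes from (a^i b^j) a = a^(i+1) b^j - j a^i b^(j+1),
   the recursion that also defines [Ncoef]. *)
Definition mula (X : ser) : ser := fun m n =>
  (if m is m'.+1 then X m' n else 0) - (if n is n'.+1 then n'%:R * X m n' else 0).

Definition mulb (X : ser) : ser := fun m n => if n is n'.+1 then X m n' else 0.

Definition mulab (r s : nat) (X : ser) : ser := iter s mulb (iter r mula X).
Arguments mulab : simpl never.

Lemma NcoefS r q i j : Ncoef r.+1 q i j = mula (Ncoef r q) i j.
Proof. by []. Qed.

Lemma Ncoef_eq0_deg r q i j : (i + j != r + q)%N -> Ncoef r q i j = 0.
Proof.
elim: r i j => [|r IH] i j /=.
  by case: i => [|i] //=; case: eqP => // ->; rewrite add0n eqxx.
case: i => [|i]; case: j => [|j] neq_deg; rewrite ?IH ?mulr0 ?subr0 //; lia.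
Qed.

Lemma Ncoef_eq0_ltb r q i j : (j < q)%N -> Ncoef r q i j = 0.
Proof.
elim: r i j => [|r IH] i j /=.
  by move=> ltjq; case: i => //=; case: (eqVneq j q) => //= E; lia.
case: i => [|i]; case: j => [|j] ltjq; rewrite ?IH ?mulr0 ?subr0 //; lia.
Qed.

Lemma iter_mulaE r (X : ser) m n :
  iter r mula X m n = \sum_(p < m.+1) \sum_(q < n.+1) X p q * Ncoef r q (m - p) n.
Proof.
elim: r m n => [|r IH] m n.
  rewrite /= big_ord_recr /= subnn big1 ?add0r => [|p _]; last first.
    by apply: big1 => q _; rewrite subn_eq0 leqNgt ltn_ord /= mulr0.
  rewrite big_ord_recr /= !eqxx mulr1 big1 ?add0r // => q _.
  by rewrite gtn_eqF ?mulr0.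
rewrite iterS {1}/mula.
have -> : \sum_(p < m.+1) \sum_(q < n.+1) X p q * Ncoef r.+1 q (m - p) n =
  \sum_(p < m.+1) \sum_(q < n.+1) X p q * (if (m - p)%N is i'.+1 then Ncoef r q i' n else 0)
  - \sum_(p < m.+1) \sum_(q < n.+1)
      X p q * (if n is n'.+1 then n'%:R * Ncoef r q (m - p) n' else 0).
  rewrite -sumrB; apply: eq_bigr => p _; rewrite -sumrB; apply: eq_bigr => q _.
  by rewrite NcoefS /mula mulrBr.
congr (_ - _).
  case: m => [|m].
    by rewrite big1 // => p _; rewrite big1 // => q _; rewrite sub0n mulr0.
  rewrite big_ord_recr /= subnn [X in _ + X]big1 ?addr0 => [|q _]; last by rewrite mulr0.
  rewrite IH; apply: eq_bigr => p _; apply: eq_bigr => q _.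
  by rewrite subSn //= -ltnS.
case: n => [|n].
  by rewrite big1 // => p _; rewrite big1 // => q _; rewrite mulr0.
rewrite IH mulr_sumr; apply: eq_bigr => p _.
rewrite [in RHS]big_ord_recr /= (@Ncoef_eq0_ltb r n.+1 _ n) // !mulr0 addr0 mulr_sumr.
by apply: eq_bigr => q _; rewrite mulrCA.
Qed.

Lemma iter_mulbE s (X : ser) m n :
  iter s mulb X m n = if (s <= n)%N then X m (n - s)%N else 0.
Proof.
elim: s n => [|s IH] n; first by rewrite /= subn0.
by rewrite iterS /mulb -/mulb; case: n => [|n] //; rewrite IH.
Qed.

Lemma mulabE r s X m n : mulab r s X m n =
  if (s <= n)%N then
    \sum_(p < m.+1) \sum_(q < (n - s).+1) X p q * Ncoef r q (m - p) (n - s)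
  else 0.
Proof. by rewrite /mulab iter_mulbE iter_mulaE. Qed.

Lemma mulab_eq0 r s X m n : (m + n < r + s)%N -> mulab r s X m n = 0.
Proof.
move=> H; rewrite mulabE; case: ifP => // Hs.
apply: big1 => p _; apply: big1 => q _; rewrite Ncoef_eq0_deg ?mulr0 //.
by apply/eqP => E; have := ltn_ord p; lia.
Qed.

Lemma smul_mulab X Y m n K : (m + n < K)%N ->
  smul X Y m n = \sum_(r < K) \sum_(s < K) Y r s * mulab r s X m n.
Proof.
move=> HK.
pose C := \sum_(p < m.+1) \sum_(s < K) \sum_(q < K) \sum_(r < K)
   (if (s <= n)%N then X p q * Y r s * Ncoef r q (m - p) (n - s) else 0).
transitivity C.
  rewrite /smul /C; apply: eq_bigr => p _.
  have Hp := ltn_ord p.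
  rewrite (big_ord_widen K (fun s : nat => \sum_(q < (m + n - p - s).+1)
      X p q * Y (m + n - p - s - q)%N s * Ncoef (m + n - p - s - q) q (m - p) (n - s)));
    last lia.
  rewrite big_mkcond; apply: eq_bigr => s _ /=.
  case: ifP => Hs; last first.
    by rewrite big1 // => q _; rewrite big1 // => r _; rewrite ifF //; lia.
  rewrite (big_ord_widen K (fun q : nat =>
      X p q * Y (m + n - p - s - q)%N s * Ncoef (m + n - p - s - q) q (m - p) (n - s)));
    last lia.
  rewrite big_mkcond; apply: eq_bigr => q _ /=.
  case: ifP => Hq.
    have Hr : (m + n - p - s - q < K)%N by lia.
    rewrite (bigD1 (Ordinal Hr)) //= [X in _ + X]big1 ?addr0; first by rewrite ifT //; lia.
    move=> r /eqP Hne; rewrite ifT; last lia.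
    rewrite Ncoef_eq0_deg ?mulr0 //; apply/eqP => E; apply: Hne; apply: val_inj => /=; lia.
  apply/esym; apply: big1 => r _; rewrite ifT; last lia.
  by rewrite Ncoef_eq0_deg ?mulr0 //; apply/eqP => E; lia.
have -> : \sum_(r < K) \sum_(s < K) Y r s * mulab r s X m n =
   \sum_(r < K) \sum_(s < K) \sum_(p < m.+1) \sum_(q < K)
     (if (s <= n)%N then X p q * Y r s * Ncoef r q (m - p) (n - s) else 0).
  apply: eq_bigr => r _; apply: eq_bigr => s _; rewrite mulabE.
  case: ifP => Hs; last by rewrite mulr0 big1 // => p _; rewrite big1.
  rewrite mulr_sumr; apply: eq_bigr => p _; rewrite mulr_sumr.
  rewrite (big_ord_widen K (fun q : nat => Y r s * (X p q * Ncoef r q (m - p) (n - s))));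
    last lia.
  rewrite big_mkcond; apply: eq_bigr => q _ /=.
  case: ifP => Hq; first by rewrite mulrCA mulrA.
  by rewrite Ncoef_eq0_ltb ?mulr0 //; lia.
apply/esym; rewrite [LHS]exchange_big /C [RHS]exchange_big /=; apply: eq_bigr => s _.
by rewrite [LHS]exchange_big /=; apply: eq_bigr => p _; rewrite [LHS]exchange_big.
Qed.

Lemma mula_iter_mulb s X m n :
  mula (iter s mulb X) m n = iter s mulb (mula X) m n - s%:R * iter s.+1 mulb X m n.
Proof.
rewrite /mula; case: m => [|m]; case: n => [|n]; rewrite !iter_mulbE /=.
- by case: s => [|s]; rewrite /= ?mulr0 ?subr0.
- have [lesn|ltns] := leqP s n.
    rewrite leqW // ltnS lesn subSn // subSS.
    by rewrite -[n in n%:R](subnK lesn) natrD mulrDl !sub0r opprD.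
  rewrite ltnS (leqNgt s n) ltns /= !mulr0 !subr0; case: ifP => // _.
  have -> : (n.+1 - s = 0)%N by lia.
  by rewrite subrr.
- by case: s => [|s]; rewrite /= ?mulr0 ?subr0.
- have [lesn|ltns] := leqP s n.
    rewrite leqW // ltnS lesn subSn // subSS.
    by rewrite -[n in n%:R](subnK lesn) natrD mulrDl opprD addrA.
  rewrite ltnS (leqNgt s n) ltns /= !mulr0 !subr0; case: ifP => // _.
  have -> : (n.+1 - s = 0)%N by lia.
  by rewrite subr0.
Qed.

Lemma mula_smul X Y : mula (smul X Y) = smul X (mula Y).
Proof.
apply: ser_ext => m n; set K := (m + n).+2.
have mulaK : mula (smul X Y) m n = \sum_(r < K) \sum_(s < K) Y r s * mula (mulab r s X) m n.
  rewrite /mula; case: m @K => [|m] K; case: n @K => [|n] K.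
  - by rewrite sub0r oppr0; apply/esym; apply: big1 => r _; apply: big1 => s _;
      rewrite ?subrr mulr0.
  - rewrite (@smul_mulab X Y 0 n K) ?sub0r ?mulr_sumr -?sumrN; last lia.
    apply: eq_bigr => r _; rewrite mulr_sumr -sumrN; apply: eq_bigr => s _.
    by rewrite sub0r mulrN mulrCA.
  - rewrite (@smul_mulab X Y m 0 K) ?subr0; last lia.
    by apply: eq_bigr => r _; apply: eq_bigr => s _; rewrite subr0.
  - rewrite (@smul_mulab X Y m n.+1 K) ?(@smul_mulab X Y m.+1 n K); try lia.
    rewrite mulr_sumr -sumrB; apply: eq_bigr => r _; rewrite mulr_sumr -sumrB.
    by apply: eq_bigr => s _; rewrite mulrBr mulrCA.
rewrite mulaK (@smul_mulab X (mula Y) m n K); last lia.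
have -> : \sum_(r < K) \sum_(s < K) Y r s * mula (mulab r s X) m n =
  \sum_(r < K) \sum_(s < K) Y r s * mulab r.+1 s X m n -
  \sum_(r < K) \sum_(s < K) s%:R * Y r s * mulab r s.+1 X m n.
  rewrite -sumrB; apply: eq_bigr => r _; rewrite -sumrB; apply: eq_bigr => s _.
  by rewrite mula_iter_mulb mulrBr mulrCA mulrA.
have -> : \sum_(r < K) \sum_(s < K) mula Y r s * mulab r s X m n =
  \sum_(r < K) \sum_(s < K)
     (if nat_of_ord r is r'.+1 then Y r' s else 0) * mulab r s X m n -
  \sum_(r < K) \sum_(s < K)
     (if nat_of_ord s is s'.+1 then s'%:R * Y r s' else 0) * mulab r s X m n.
  rewrite -sumrB; apply: eq_bigr => r _; rewrite -sumrB; apply: eq_bigr => s _.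
  by rewrite /mula mulrBl.
congr (_ - _).
  rewrite [LHS]big_ord_recr /= [X in _ + X]big1 ?addr0 => [|s _]; last first.
    by rewrite mulab_eq0 ?mulr0 //; lia.
  by rewrite [RHS]big_ord_recl /= [X in X + _]big1 ?add0r // => s _; rewrite mul0r.
apply: eq_bigr => r _.
rewrite [LHS]big_ord_recr /= mulab_eq0 ?mulr0 ?addr0; last lia.
by rewrite [RHS]big_ord_recl /= mul0r add0r.
Qed.

Lemma mulb_smul X Y : mulb (smul X Y) = smul X (mulb Y).
Proof.
apply: ser_ext => m [|n].
  rewrite (@smul_mulab X (mulb Y) m 0 m.+1) ?addn0 //; apply/esym.
  apply: big1 => r _; apply: big1 => s _; case: (nat_of_ord s) => [|s'] /=.
    by rewrite mul0r.
  by rewrite /mulab iter_mulbE /= mulr0.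
rewrite (@smul_mulab X (mulb Y) m n.+1 (m + n).+2); last lia.
rewrite /mulb (@smul_mulab X Y m n (m + n).+2); last lia.
apply: eq_bigr => r _; rewrite [RHS]big_ord_recl /= mul0r add0r.
by rewrite [LHS]big_ord_recr /= mulab_eq0 ?mulr0 ?addr0 //; lia.
Qed.

Lemma mulab_smul r s X Y : mulab r s (smul X Y) = smul X (mulab r s Y).
Proof.
have mulaX t : iter t mula (smul X Y) = smul X (iter t mula Y).
  by elim: t => //= t ->; rewrite mula_smul.
have mulbX t Z : iter t mulb (smul X Z) = smul X (iter t mulb Z).
  by elim: t => //= t ->; rewrite mulb_smul.
by rewrite /mulab mulaX mulbX.
Qed.

Lemma smulA X Y Z : smul (smul X Y) Z = smul X (smul Y Z).
Proof.
apply: ser_ext => m n; set K := (m + n).+1.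
rewrite (@smul_mulab (smul X Y) Z m n K) ?(@smul_mulab X (smul Y Z) m n K) //.
have -> : \sum_(r < K) \sum_(s < K) smul Y Z r s * mulab r s X m n =
  \sum_(r < K) \sum_(s < K) \sum_(t < K) \sum_(u < K)
     Z t u * mulab t u Y r s * mulab r s X m n.
  apply: eq_bigr => r _; apply: eq_bigr => s _.
  have [Hrs|Hrs] := leqP (r + s) (m + n).
    by rewrite (@smul_mulab Y Z r s K) // mulr_suml; apply: eq_bigr => t _; rewrite mulr_suml.
  rewrite mulab_eq0 // mulr0; apply/esym.
  by apply: big1 => t _; apply: big1 => u _; rewrite mulr0.
have -> : \sum_(t < K) \sum_(u < K) Z t u * mulab t u (smul X Y) m n =
  \sum_(t < K) \sum_(u < K) \sum_(r < K) \sum_(s < K)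
     Z t u * mulab t u Y r s * mulab r s X m n.
  apply: eq_bigr => t _; apply: eq_bigr => u _.
  rewrite mulab_smul (@smul_mulab X (mulab t u Y) m n K) // mulr_sumr.
  by apply: eq_bigr => r _; rewrite mulr_sumr; apply: eq_bigr => s _; rewrite mulrA.
under eq_bigr => t _ do rewrite exchange_big.
under eq_bigr => t _ do under eq_bigr => r _ do rewrite exchange_big.
by rewrite exchange_big /=; under eq_bigr => r _ do rewrite exchange_big.
Qed.

Lemma smulx1 X : smul X sone = X.
Proof.
apply: ser_ext => m n; rewrite (@smul_mulab X sone m n (m + n).+1) //.
rewrite big_ord_recl [X in _ + X]big1 ?addr0 => [|r _]; last first.
  by apply: big1 => s _; rewrite /sone /= mul0r.
rewrite big_ord_recl [X in _ + X]big1 ?addr0 => [|s _]; last by rewrite /sone /= mul0r.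
by rewrite /sone /= mul1r.
Qed.

Lemma smulDl X1 X2 Y : smul (sadd X1 X2) Y = sadd (smul X1 Y) (smul X2 Y).
Proof.
apply: ser_ext => m n; rewrite /smul /sadd -big_split; apply: eq_bigr => p _.
rewrite -big_split; apply: eq_bigr => s _; rewrite -big_split; apply: eq_bigr => q _.
by rewrite !mulrDl.
Qed.

Lemma smulDr X Y1 Y2 : smul X (sadd Y1 Y2) = sadd (smul X Y1) (smul X Y2).
Proof.
apply: ser_ext => m n; rewrite /smul /sadd -big_split; apply: eq_bigr => p _.
rewrite -big_split; apply: eq_bigr => s _; rewrite -big_split; apply: eq_bigr => q _.
by rewrite mulrDr !mulrDl.
Qed.

Lemma smulBl X1 X2 Y : smul (ssub X1 X2) Y = ssub (smul X1 Y) (smul X2 Y).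
Proof.
apply: ser_ext => m n; rewrite /smul /ssub -sumrB; apply: eq_bigr => p _.
rewrite -sumrB; apply: eq_bigr => s _; rewrite -sumrB; apply: eq_bigr => q _.
by rewrite !mulrBl.
Qed.

Lemma smul0x Y : smul szero Y = szero.
Proof.
apply: ser_ext => m n; rewrite /smul.
by apply: big1 => p _; apply: big1 => s _; apply: big1 => q _; rewrite /szero !mul0r.
Qed.

Lemma saddA X Y Z : sadd (sadd X Y) Z = sadd X (sadd Y Z).
Proof. by apply: ser_ext => m n; rewrite /sadd addrA. Qed.

Lemma smul_suml k (F : nat -> ser) Y :
  smul (fun m n => \sum_(j < k) F j m n) Y = fun m n => \sum_(j < k) smul (F j) Y m n.
Proof.
elim: k => [|k IH].
  have -> : (fun m n => \sum_(j < 0) F j m n) = szero by apply: ser_ext => m n; rewrite big_ord0.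
  by rewrite smul0x; apply: ser_ext => m n; rewrite big_ord0.
have -> : (fun m n => \sum_(j < k.+1) F j m n) = sadd (fun m n => \sum_(j < k) F j m n) (F k).
  by apply: ser_ext => m n; rewrite big_ord_recr.
by rewrite smulDl IH; apply: ser_ext => m n; rewrite /sadd big_ord_recr.
Qed.

Lemma smul_slin X lam : smul X (slin lam) = fun m n => mula X m n - lam * mulb X m n.
Proof.
apply: ser_ext => m n; rewrite (@smul_mulab X (slin lam) m n (m + n).+2) //.
have first2 (f : nat -> CC) : (forall i, (2 <= i)%N -> f i = 0) ->
    \sum_(i < (m + n).+2) f i = f 0%N + f 1%N.
  by move=> f2; rewrite !big_ord_recl big1 ?addr0 ?addrA // => i _; apply: f2.
have slin2 r s : (2 <= s)%N -> slin lam r s = 0.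
  by case: s => [|[|s]] // _; rewrite /slin /= !andbF.
have row r : \sum_(s < (m + n).+2) slin lam r s * mulab r s X m n =
    slin lam r 0 * mulab r 0 X m n + slin lam r 1 * mulab r 1 X m n.
  by rewrite (first2 (fun s => slin lam r s * mulab r s X m n)) // => s /slin2 ->; rewrite mul0r.
rewrite (first2 (fun r => \sum_(s < (m + n).+2) slin lam r s * mulab r s X m n)); last first.
  by move=> [|[|r]] // _; rewrite row /slin /= !mul0r addr0.
by rewrite !row /slin /mulab /= !mul0r add0r addr0 mul1r mulNr addrC.
Qed.

Lemma smul_sapow X j : smul X (sapow j) = iter j mula X.
Proof.
apply: ser_ext => m n; have Hj : (j < (m + n + j).+1)%N by lia.
rewrite (@smul_mulab X (sapow j) m n (m + n + j).+1); last lia.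
rewrite (bigD1 (Ordinal Hj)) //= [X in _ + X]big1 => [|r Hr]; last first.
  apply: big1 => s _; rewrite /sapow.
  have /negbTE -> : nat_of_ord r != j by apply: contra_neq Hr => E; apply: val_inj.
  by rewrite mul0r.
rewrite addr0 big_ord_recl [X in _ + X]big1 ?addr0 => [|s _]; last by rewrite /sapow /= eqxx mul0r.
by rewrite /sapow /= eqxx mul1r.
Qed.

Lemma mulaE X : mula X = smul X (sapow 1).
Proof. by rewrite smul_sapow. Qed.

Lemma smul_sapowS X j : smul X (sapow j.+1) = mula (smul X (sapow j)).
Proof. by rewrite !smul_sapow. Qed.

Lemma slin0 : slin 0 = sapow 1.
Proof.
apply: ser_ext => m n; rewrite /slin /sapow oppr0.
by case: (m == 1%N); case: (n == 0%N); case: ifP.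
Qed.

(** * Support in the a-degree *)

Definition adeg_lt (k : nat) (X : ser) : Prop := forall m n, (k <= m)%N -> X m n = 0.

Lemma adeg_lt_mula k X : adeg_lt k X -> adeg_lt k.+1 (mula X).
Proof.
move=> Xk [|m] n // lekm; rewrite /mula !Xk ?(ltnW lekm) //.
by case: n => [|n]; rewrite ?Xk ?(ltnW lekm) ?mulr0 ?subr0.
Qed.

Lemma adeg_lt_iter_mula j k X : adeg_lt k X -> adeg_lt (j + k) (iter j mula X).
Proof. by move=> Xk; elim: j => //= j IH; rewrite addSn; apply: adeg_lt_mula. Qed.

Lemma inB_adeg_lt1 V : inB V -> adeg_lt 1 V.
Proof. by case. Qed.

Lemma smul_bseries X V : adeg_lt 1 V ->
  smul X V = fun m n => \sum_(s < n.+1) V 0%N s * X m (n - s)%N.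
Proof.
move=> V1; apply: ser_ext => m n.
rewrite (@smul_mulab X V m n (m + n).+1) // big_ord_recl [X in _ + X]big1 ?addr0 => [|r _];
  last by apply: big1 => s _; rewrite V1 ?mul0r.
rewrite (big_ord_widen (m + n).+1 (fun s : nat => V 0%N s * X m (n - s)%N)); last lia.
rewrite [RHS]big_mkcond; apply: eq_bigr => s _ /=.
by rewrite /mulab /= iter_mulbE ltnS; case: ifP; rewrite ?mulr0.
Qed.

Lemma adeg_lt_mul_bseries k R V : adeg_lt k R -> adeg_lt 1 V -> adeg_lt k (smul R V).
Proof.
move=> Rk V1 m n lekm; rewrite smul_bseries //.
by apply: big1 => s _; rewrite Rk ?mulr0.
Qed.

(* The b-series [b^2 V' - lam b V]. *)
Definition bcomm (lam : CC) (V : ser) : ser := fun m n =>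
  if m is 0%N then (if n is n'.+1 then (n'%:R - lam) * V 0%N n' else 0) else 0.

Lemma adeg_lt1_bcomm lam V : adeg_lt 1 (bcomm lam V).
Proof. by case. Qed.

Lemma slin_mul_bseries lam V : adeg_lt 1 V ->
  smul (slin lam) V = sadd (mula V) (bcomm lam V).
Proof.
move=> V1; rewrite smul_bseries //; apply: ser_ext => m n.
rewrite /sadd /mula /bcomm; case: m => [|[|m]].
- case: n => [|n]; first by rewrite big_ord1 /slin /=; ring.
  rewrite big_ord_recr /= subnn /slin /= mulr0 addr0.
  case: n => [|n]; first by rewrite big_ord1 /=; ring.
  rewrite big_ord_recr /= big1 => [|s _]; first by rewrite subSnn /=; ring.
  have -> : (n.+2 - s = (n.+1 - s).+1)%N by have := ltn_ord s; lia.
  by rewrite gtn_eqF /= ?mulr0 //; have := ltn_ord s; lia.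
- rewrite big_ord_recr /= subnn /slin /= big1 => [|s _].
    by case: n => [|n]; rewrite ?(V1 1%N) //; ring.
  by rewrite subn_eq0 leqNgt ltn_ord /= mulr0.
- rewrite big1 => [|s _]; last by rewrite /slin /= mulr0.
  by rewrite (V1 m.+1) //; case: n => [|n]; rewrite ?(V1 m.+2) //; ring.
Qed.

Lemma adeg_lt_slin k lam Y : adeg_lt k.+1 (smul Y (slin lam)) -> adeg_lt k Y.
Proof.
rewrite smul_slin => YL m n; elim: n m => [|n IH] m lekm.
  by have := YL m.+1 0%N lekm; rewrite /mula /mulb /= !mulr0 !subr0.
have := YL m.+1 n.+1 lekm; rewrite /mula /mulb /= IH ?(leqW lekm) //.
by rewrite !mulr0 !subr0.
Qed.

(** * Gevrey bounds *)

Definition cabs (z : CC) : RR := ComplexField.Normc.normc z.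
Arguments cabs : simpl never.

Lemma norm_cabs (z : CC) : `|z| = (cabs z)%:C%C.
Proof. by case: z. Qed.

Lemma le_cabs (z : CC) (x : RR) : (`|z| <= x%:C%C) = (cabs z <= x).
Proof. by rewrite norm_cabs lecR. Qed.

Lemma cabs_ge0 (z : CC) : 0 <= cabs z.
Proof. by rewrite -ler0c -norm_cabs normr_ge0. Qed.

Lemma cabs0 : cabs 0 = 0.
Proof. exact: ComplexField.Normc.normc0. Qed.

Lemma cabsD (x y : CC) : cabs (x + y) <= cabs x + cabs y.
Proof. exact: le_normcD. Qed.

Lemma cabsM (x y : CC) : cabs (x * y) = cabs x * cabs y.
Proof. exact: ComplexField.Normc.normcM. Qed.

Lemma cabsN (x : CC) : cabs (- x) = cabs x.
Proof. exact: normcN. Qed.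

Lemma cabs_nat n : cabs n%:R = n%:R.
Proof. by rewrite /cabs normcMn ComplexField.Normc.normc1. Qed.

Lemma cabs_sum k (F : 'I_k -> CC) : cabs (\sum_(i < k) F i) <= \sum_(i < k) cabs (F i).
Proof.
rewrite -lecR rmorph_sum -norm_cabs; apply: le_trans (ler_norm_sum _ _ _) _.
by apply: ler_sum => i _; rewrite norm_cabs.
Qed.

Lemma fact_mul_le s n : (s <= n)%N -> ((s`!)%:R * ((n - s)`!)%:R : RR) <= (n`!)%:R.
Proof.
by move=> lesn; rewrite -natrM ler_nat -(bin_fact lesn) leq_pmull ?bin_gt0.
Qed.

Definition gevrey_bounded (X : ser) (c rho : RR) : Prop :=
  forall p q, cabs (X p q) <= c * rho ^+ (p + q) * (q`!)%:R.

Lemma AconvP X : Aconv X <-> exists (c rho : RR), 0 < c /\ 1 < rho /\ gevrey_bounded X c rho.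
Proof.
split=> [[rho [c [rho_gt1 [c_gt0 XB]]]] | [c [rho [c_gt0 [rho_gt1 XB]]]]].
  by exists c, rho; do 2!split=> //; move=> p q; rewrite -le_cabs.
by exists rho, c; do 2!split=> //; move=> p q; rewrite le_cabs.
Qed.

Lemma inB_bounded S : inB S -> exists (c rho : RR), 0 < c /\ 1 <= rho /\ gevrey_bounded S c rho.
Proof.
move=> [S1 [c [rho SB]]]; exists (`|c| + 1), (`|rho| + 1).
have c_gt0 : 0 < `|c| + 1 by rewrite ltr_pwDr.
split=> //; split=> [|[|p] q]; first by rewrite lerDr.
  apply: le_trans (_ : c * rho ^+ q * (q`!)%:R <= _); first by rewrite -le_cabs.
  apply: le_trans (ler_norm _) _; rewrite !normrM normrX normr_nat.
  rewrite ler_wpM2r ?ler0n // ler_pM ?exprn_ge0 ?lerXn2r ?nnegrE ?addr_ge0 //.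
    by rewrite lerDl.
  by rewrite lerDl.
rewrite S1 // cabs0.
by rewrite !mulr_ge0 ?exprn_ge0 ?ler0n ?addr_ge0 // ltW.
Qed.

Lemma inB_of_bounded S (c rho : RR) : adeg_lt 1 S -> gevrey_bounded S c rho -> inB S.
Proof. by move=> S1 SB; split=> //; exists c, rho => q; rewrite le_cabs SB. Qed.

Lemma gevrey_bounded_le X (c rho rho' : RR) : 0 <= c -> 0 <= rho -> rho <= rho' ->
  gevrey_bounded X c rho -> gevrey_bounded X c rho'.
Proof.
move=> c_ge0 rho_ge0 le_rho XB p q; apply: le_trans (XB p q) _.
by rewrite ler_wpM2r ?ler0n // ler_wpM2l // lerXn2r ?nnegrE // (le_trans rho_ge0).
Qed.

Lemma gevrey_boundedD X Y (c1 c2 rho : RR) :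
  gevrey_bounded X c1 rho -> gevrey_bounded Y c2 rho ->
  gevrey_bounded (sadd X Y) (c1 + c2) rho.
Proof.
move=> XB YB p q; apply: le_trans (cabsD _ _) _.
by rewrite !mulrDl lerD.
Qed.

(* The factor 2 in the radius absorbs the n + 1 terms of the convolution in b. *)
Lemma gevrey_bounded_mul_bseries X V (c1 c2 rho : RR) : adeg_lt 1 V ->
  0 <= c1 -> 0 <= c2 -> 0 <= rho ->
  gevrey_bounded X c1 rho -> gevrey_bounded V c2 rho ->
  gevrey_bounded (smul X V) (c1 * c2) (2%:R * rho).
Proof.
move=> V1 c1_ge0 c2_ge0 rho_ge0 XB VB m n; rewrite smul_bseries //.
set M := c1 * c2 * rho ^+ (m + n) * (n`!)%:R.
have term (s : 'I_n.+1) : cabs (V 0%N s * X m (n - s)%N) <= M.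
  have lesn : (s <= n)%N by rewrite -ltnS.
  rewrite cabsM.
  apply: le_trans (ler_pM (cabs_ge0 _) (cabs_ge0 _) (VB 0%N s) (XB m (n - s)%N)) _.
  have -> : c2 * rho ^+ (0 + s) * (s`!)%:R * (c1 * rho ^+ (m + (n - s)) * ((n - s)`!)%:R)
      = c1 * c2 * rho ^+ (m + n) * ((s`!)%:R * ((n - s)`!)%:R).
    by rewrite -[(m + n)%N](_ : (s + (m + (n - s)) = m + n)%N) ?exprD //=; [ring | lia].
  by rewrite ler_wpM2l ?fact_mul_le // !mulr_ge0 ?exprn_ge0.
apply: le_trans (cabs_sum _) _; apply: le_trans (ler_sum _ (fun s _ => term s)) _.
have M_ge0 : 0 <= M by rewrite !mulr_ge0 ?exprn_ge0 ?ler0n.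
rewrite sumr_const card_ord -[M *+ _]mulr_natr.
apply: le_trans (ler_wpM2l M_ge0 (_ : n.+1%:R <= 2%:R ^+ (m + n))) _.
  rewrite -natrX ler_nat.
  exact: leq_trans (ltn_expl n (ltnSn 1)) (leq_pexp2l _ (leq_addl m n)).
by rewrite /M exprMn le_eqVlt; apply/orP; left; apply/eqP; ring.
Qed.

Lemma gevrey_bounded_bcomm lam V (c rho : RR) : 0 <= c -> 1 <= rho ->
  gevrey_bounded V c rho -> gevrey_bounded (bcomm lam V) ((cabs lam + 1) * c) rho.
Proof.
move=> c_ge0 rho_ge1 VB p n.
have rhs_ge0 : 0 <= (cabs lam + 1) * c * rho ^+ (p + n) * (n`!)%:R.
  by rewrite !mulr_ge0 ?addr_ge0 ?cabs_ge0 ?exprn_ge0 ?ler0n // (le_trans _ rho_ge1).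
case: p rhs_ge0 => [|p] rhs_ge0;
  last by rewrite (_ : bcomm lam V p.+1 n = 0) // cabs0.
case: n rhs_ge0 => [|n] rhs_ge0;
  first by rewrite (_ : bcomm lam V 0 0 = 0) // cabs0.
rewrite (_ : bcomm lam V 0 n.+1 = (n%:R - lam) * V 0%N n) // cabsM.
have lam_le : cabs (n%:R - lam) <= n%:R + cabs lam.
  by apply: le_trans (cabsD _ _) _; rewrite cabsN cabs_nat.
apply: le_trans (ler_pM (cabs_ge0 _) (cabs_ge0 _) lam_le (VB 0%N n)) _.
have L_ge0 := cabs_ge0 lam; have n_ge0 : (0 : RR) <= n%:R := ler0n _ _.
set L := cabs lam; set A := c * rho ^+ (0 + n) * (n`!)%:R.
have A_ge0 : 0 <= A by rewrite !mulr_ge0 ?exprn_ge0 ?ler0n // (le_trans _ rho_ge1).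
have -> : (L + 1) * c * rho ^+ (0 + n.+1) * (n.+1`!)%:R = (L + 1) * (n%:R + 1) * A * rho.
  by rewrite /A factS natrM -natr1 !add0n exprS; ring.
have LnA_ge0 : 0 <= L * n%:R * A := mulr_ge0 (mulr_ge0 L_ge0 n_ge0) A_ge0.
have -> : (n%:R + L) * A = (L + 1) * (n%:R + 1) * A - (L * n%:R + 1) * A by ring.
have X_ge0 : 0 <= (L + 1) * (n%:R + 1) * A.
  exact: mulr_ge0 (mulr_ge0 (addr_ge0 L_ge0 ler01) (addr_ge0 n_ge0 ler01)) A_ge0.
nra.
Qed.

Lemma inB_szero : inB szero.
Proof.
apply: (@inB_of_bounded _ 0 0) => [//|p q].
by rewrite /szero cabs0 !mul0r.
Qed.

Lemma inB_add S1 S2 : inB S1 -> inB S2 -> inB (sadd S1 S2).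
Proof.
move=> B1 B2; have [c1 [r1 [c1_gt0 [r1_ge1 SB1]]]] := inB_bounded B1.
have [c2 [r2 [c2_gt0 [r2_ge1 SB2]]]] := inB_bounded B2.
apply: (@inB_of_bounded _ (c1 + c2) (r1 + r2)).
  by move=> m n le1m; rewrite /sadd (inB_adeg_lt1 B1) ?(inB_adeg_lt1 B2) ?addr0.
apply: gevrey_boundedD.
  by apply: (gevrey_bounded_le _ _ _ SB1); lra.
by apply: (gevrey_bounded_le _ _ _ SB2); lra.
Qed.

Lemma inB_mul U V : inB U -> inB V -> inB (smul U V).
Proof.
move=> BU BV; have [c1 [r1 [c1_gt0 [r1_ge1 UB]]]] := inB_bounded BU.
have [c2 [r2 [c2_gt0 [r2_ge1 VB]]]] := inB_bounded BV.
apply: (@inB_of_bounded _ (c1 * c2) (2%:R * (r1 + r2))).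
  exact: adeg_lt_mul_bseries (inB_adeg_lt1 BU) (inB_adeg_lt1 BV).
apply: gevrey_bounded_mul_bseries (inB_adeg_lt1 BV) _ _ _ _ _; try lra.
  by apply: (gevrey_bounded_le _ _ _ UB); lra.
by apply: (gevrey_bounded_le _ _ _ VB); lra.
Qed.

Lemma inB_bcomm lam V : inB V -> inB (bcomm lam V).
Proof.
move=> BV; have [c [rho [c_gt0 [rho_ge1 VB]]]] := inB_bounded BV.
apply: (inB_of_bounded (adeg_lt1_bcomm lam V)).
exact: gevrey_bounded_bcomm (ltW c_gt0) rho_ge1 VB.
Qed.

Lemma Aconv_mul_inB X V : Aconv X -> inB V -> Aconv (smul X V).
Proof.
move=> /AconvP [c1 [r1 [c1_gt0 [r1_gt1 XB]]]] BV.
have [c2 [r2 [c2_gt0 [r2_ge1 VB]]]] := inB_bounded BV.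
apply/AconvP; exists (c1 * c2), (2%:R * (r1 + r2)); split; first exact: mulr_gt0.
split; first lra.
apply: gevrey_bounded_mul_bseries (inB_adeg_lt1 BV) _ _ _ _ _; try lra.
  by apply: (gevrey_bounded_le _ _ _ XB); lra.
by apply: (gevrey_bounded_le _ _ _ VB); lra.
Qed.

(** * Division by a - lam b *)

(* Comparing coefficients in X = Q (a - lam b) + r, with Q (a - lam b) given by
   [smul_slin], determines Q a-row by a-row; [sdivq lam X p.+1] is a-row [p] of
   the quotient Q and [sdivq lam X 0] is the remainder r, a series in b. *)
Fixpoint sdivq (lam : CC) (X : ser) (p n : nat) {struct n} : CC :=
  match n with
  | 0 => X p 0%N
  | n'.+1 => X p n'.+1 + (n'%:R + lam) * sdivq lam X p.+1 n'
  end.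

Definition squo (lam : CC) (X : ser) : ser := fun p n => sdivq lam X p.+1 n.

Definition srem (lam : CC) (X : ser) : ser := fun p n => if p is 0 then sdivq lam X 0 n else 0.

Lemma squo_srem lam X : X = sadd (smul (squo lam X) (slin lam)) (srem lam X).
Proof.
rewrite smul_slin; apply: ser_ext => -[|p] [|n];
  by rewrite /sadd /mula /mulb /squo /srem /=; ring.
Qed.

Lemma sdivq_bound_step (a L y f : RR) : 0 <= a -> 0 <= L -> 1 <= y -> 0 <= f ->
  (a + 1) * f + (a + L) * (y * f) <= (L + 2%:R) * y * ((a + 1) * f).
Proof.
move=> a_ge0 L_ge0 y_ge1 f_ge0.
have -> : (L + 2%:R) * y * ((a + 1) * f) = (a + 1) * f + (a + L) * (y * f)
    + ((y - 1) * (a * L + a + 2%:R) + a * L + 1) * f by ring.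
have aL_ge0 := mulr_ge0 a_ge0 L_ge0.
have yaL_ge0 : 0 <= (y - 1) * (a * L + a + 2%:R) by apply: mulr_ge0; lra.
by rewrite lerDl; apply: mulr_ge0 => //; lra.
Qed.

Lemma sdivq_bounded lam X (C rho : RR) : 0 <= C -> 0 <= rho ->
  gevrey_bounded X C rho -> forall n p,
  cabs (sdivq lam X p n) <= C * rho ^+ (p + n) * (cabs lam + 2%:R) ^+ n * (n`!)%:R.
Proof.
move=> C_ge0 rho_ge0 XB; elim=> [|n IH] p /=; first by rewrite expr0 mulr1 XB.
apply: le_trans (cabsD _ _) _; rewrite cabsM.
have lam_le : cabs (n%:R + lam) <= n%:R + cabs lam.
  by apply: le_trans (cabsD _ _) _; rewrite cabs_nat.
set L := cabs lam; have L_ge0 : 0 <= L := cabs_ge0 lam.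
set E := C * rho ^+ (p + n.+1); pose y := (L + 2%:R) ^+ n; pose f : RR := (n`!)%:R.
have E_ge0 : 0 <= E by rewrite mulr_ge0 ?exprn_ge0.
have y_ge1 : 1 <= y by rewrite exprn_ege1 //; lra.
have f_ge0 : 0 <= f by rewrite ler0n.
have n_ge0 : (0 : RR) <= n%:R by rewrite ler0n.
have XB' : cabs (X p n.+1) <= E * ((n%:R + 1) * f) by rewrite /E /f natr1 -natrM -factS; exact: XB.
have QB : cabs (n%:R + lam) * cabs (sdivq lam X p.+1 n) <= (n%:R + L) * (E * y * f).
  apply: ler_pM; rewrite ?cabs_ge0 //; apply: le_trans (IH p.+1) _.
  by rewrite addSnnS.
have := ler_wpM2l E_ge0 (sdivq_bound_step n_ge0 L_ge0 y_ge1 f_ge0).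
rewrite exprS factS natrM -natr1 -/f -/y; nra.
Qed.

Lemma Aconv_squo lam X : Aconv X -> Aconv (squo lam X).
Proof.
move=> /AconvP [C [rho [C_gt0 [rho_gt1 XB]]]]; set L := cabs lam.
have L_ge0 : 0 <= L := cabs_ge0 lam.
apply/AconvP; exists (C * rho), (rho * (L + 2%:R)).
split; first by rewrite mulr_gt0 //; lra.
split; first nra.
move=> p n; apply: le_trans (sdivq_bounded _ _ _ XB n p.+1) _; try lra.
rewrite exprMn addSn exprS.
have le_pow : (L + 2%:R) ^+ n <= (L + 2%:R) ^+ (p + n) by rewrite ler_weXn2l ?leq_addl //; lra.
have M_ge0 : 0 <= C * rho * rho ^+ (p + n) * (n`!)%:R.
  by rewrite !mulr_ge0 ?exprn_ge0 ?ler0n //; lra.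
have := ler_wpM2l M_ge0 le_pow; lra.
Qed.

Lemma inB_srem lam X : Aconv X -> inB (srem lam X).
Proof.
move=> /AconvP [C [rho [C_gt0 [rho_gt1 XB]]]]; set L := cabs lam.
have L_ge0 : 0 <= L := cabs_ge0 lam.
apply: (@inB_of_bounded _ C (rho * (L + 2%:R))) => [[|m] n //|[|p] n].
  rewrite /srem exprMn add0n mulrA.
  by apply: (sdivq_bounded lam _ _ XB n 0%N); lra.
have rhoL_ge0 : 0 <= rho * (L + 2%:R) by nra.
by rewrite /srem /= cabs0 !mulr_ge0 ?exprn_ge0 ?ler0n //; lra.
Qed.

(** * Polynomials in a over B *)

Lemma BaDegLt_adeg_lt k R : BaDegLt k R -> adeg_lt k R.
Proof.
move=> [W [BW ->]] m n lekm; apply: big1 => j _; rewrite smul_sapow.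
apply: (@adeg_lt_iter_mula j 1 _ (inB_adeg_lt1 (BW j (ltn_ord j))) m n).
by rewrite addn1 (leq_trans (ltn_ord j)).
Qed.

Lemma BaDegLt_szero k : BaDegLt k szero.
Proof.
exists (fun _ => szero); split=> [j _|]; first exact: inB_szero.
by apply: ser_ext => m n; rewrite big1 // => j _; rewrite smul0x.
Qed.

Lemma BaDegLt_bseries V : inB V -> BaDegLt 1 V.
Proof.
move=> BV; exists (fun _ => V); split=> //.
by apply: ser_ext => m n; rewrite big_ord1 smul_sapow.
Qed.

Lemma BaDegLt_widen k k' R : (k <= k')%N -> BaDegLt k R -> BaDegLt k' R.
Proof.
move=> lekk' [W [BW ->]].
exists (fun j => if (j < k)%N then W j else szero); split=> [j _|].
  by case: ifP => [/BW //|_]; exact: inB_szero.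
apply: ser_ext => m n; rewrite (big_ord_widen k' (fun j => smul (W j) (sapow j) m n)) //.
by rewrite big_mkcond; apply: eq_bigr => j _; case: ifP; rewrite ?smul0x.
Qed.

Lemma BaDegLt_add k R1 R2 : BaDegLt k R1 -> BaDegLt k R2 -> BaDegLt k (sadd R1 R2).
Proof.
move=> [W1 [BW1 ->]] [W2 [BW2 ->]].
exists (fun j => sadd (W1 j) (W2 j)); split=> [j ltjk|]; first by apply: inB_add; auto.
by apply: ser_ext => m n; rewrite /sadd -big_split; apply: eq_bigr => j _; rewrite smulDl.
Qed.

Lemma BaDegLt_sum k k' (G : nat -> ser) : (forall j, (j < k')%N -> BaDegLt k (G j)) ->
  BaDegLt k (fun m n => \sum_(j < k') G j m n).
Proof.
elim: k' => [|k' IH] BG.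
  have -> : (fun m n => \sum_(j < 0) G j m n) = szero by apply: ser_ext => m n; rewrite big_ord0.
  exact: BaDegLt_szero.
have -> : (fun m n => \sum_(j < k'.+1) G j m n) = sadd (fun m n => \sum_(j < k') G j m n) (G k').
  by apply: ser_ext => m n; rewrite big_ord_recr.
by apply: BaDegLt_add; [apply: IH => j ltjk; apply: BG; apply: ltnW | apply: BG].
Qed.

Lemma BaDegLt_mula k R : BaDegLt k R -> BaDegLt k.+1 (mula R).
Proof.
move=> [W [BW ->]].
exists (fun j => if j is j'.+1 then W j' else szero); split=> [[|j] ltjk|].
- exact: inB_szero.
- exact: BW.
rewrite mulaE (smul_suml k (fun j => smul (W j) (sapow j))); apply: ser_ext => m n.
by rewrite big_ord_recl /= smul0x /szero add0r; apply: eq_bigr => j _; rewrite -mulaE smul_sapowS.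
Qed.

Lemma BaDegLt_apow_mul U V j : inB U -> inB V -> BaDegLt j.+1 (smul (smul U (sapow j)) V).
Proof.
move=> BU; elim: j V => [|j IH] V BV.
  by rewrite smul_sapow; apply: BaDegLt_bseries; apply: inB_mul.
rewrite smul_sapowS mulaE smulA -slin0 (slin_mul_bseries _ (inB_adeg_lt1 BV)) smulDr.
apply: BaDegLt_add; first by rewrite -mula_smul; apply: BaDegLt_mula; apply: IH.
by apply: BaDegLt_widen (leqnSn _) _; apply: IH; apply: inB_bcomm.
Qed.

Lemma BaDegLt_mul_inB k R V : BaDegLt k R -> inB V -> BaDegLt k (smul R V).
Proof.
move=> [W [BW ->]] BV; rewrite (smul_suml k (fun j => smul (W j) (sapow j))).
apply: (BaDegLt_sum (G := fun j => smul (smul (W j) (sapow j)) V)) => j ltjk.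
exact: BaDegLt_widen ltjk (@BaDegLt_apow_mul _ _ j (BW j ltjk) BV).
Qed.

Lemma BaDegLt_mul_slin k R lam S : BaDegLt k R -> inB S ->
  BaDegLt k.+1 (smul R (smul (slin lam) S)).
Proof.
move=> BR BS; rewrite (slin_mul_bseries _ (inB_adeg_lt1 BS)) smulDr.
apply: BaDegLt_add; first by rewrite -mula_smul; apply: BaDegLt_mula; apply: BaDegLt_mul_inB.
by apply: BaDegLt_widen (leqnSn _) _; apply: BaDegLt_mul_inB BR (inB_bcomm _ BS).
Qed.

Lemma Pprod_div_exists k lam Ss X : (forall i, (i < k)%N -> invB (Ss i)) -> Aconv X ->
  exists Q R, Aconv Q /\ BaDegLt k R /\ X = sadd (smul Q (Pprod lam Ss k)) R.
Proof.
elim: k X => [|k IH] X invS AX.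
  exists X, szero; split=> //; split; first exact: BaDegLt_szero.
  by apply: ser_ext => m n; rewrite /= smulx1 /sadd /szero addr0.
have [BS [T [BT [_ TS]]]] := invS k (ltnSn k).
set Y := smul X T; have AY : Aconv Y := Aconv_mul_inB AX BT.
have [Q [R [AQ [BR EY]]]] := IH (squo (lam k) Y) (fun i lt => invS i (ltnW lt)) (Aconv_squo _ AY).
exists Q, (sadd (smul R (smul (slin (lam k)) (Ss k))) (smul (srem (lam k) Y) (Ss k))).
split=> //; split.
  apply: BaDegLt_add; first exact: BaDegLt_mul_slin.
  exact: BaDegLt_widen (BaDegLt_bseries (inB_mul (inB_srem _ AY) BS)).
have -> : X = smul Y (Ss k) by rewrite /Y smulA TS smulx1.
by rewrite {1}(squo_srem (lam k) Y) EY !smulDl !smulA saddA.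
Qed.

Lemma Pprod_adeg_lt_eq0 k lam Ss Q : (forall i, (i < k)%N -> invB (Ss i)) ->
  adeg_lt k (smul Q (Pprod lam Ss k)) -> Q = szero.
Proof.
elim: k Q => [|k IH] Q invS.
  by rewrite /= smulx1 => Q0; apply: ser_ext => m n; apply: Q0.
have [BS [T [BT [ST _]]]] := invS k (ltnSn k).
rewrite /= -!smulA => QP; apply: (IH Q (fun i lt => invS i (ltnW lt))).
apply: (@adeg_lt_slin _ (lam k)).
rewrite -[smul _ (slin _)]smulx1 -ST -smulA.
exact: adeg_lt_mul_bseries QP (inB_adeg_lt1 BT).
Qed.

Lemma Pprod_div_unique k lam Ss Q R Q' R' : (forall i, (i < k)%N -> invB (Ss i)) ->
  BaDegLt k R -> BaDegLt k R' ->
  sadd (smul Q (Pprod lam Ss k)) R = sadd (smul Q' (Pprod lam Ss k)) R' -> Q' = Q /\ R' = R.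
Proof.
move=> invS BR BR' E.
have Emn m n : smul Q (Pprod lam Ss k) m n + R m n = smul Q' (Pprod lam Ss k) m n + R' m n.
  exact: (congr1 (fun Z : ser => Z m n) E).
have QQ : ssub Q' Q = szero.
  apply: (Pprod_adeg_lt_eq0 (lam := lam) invS) => m n lekm.
  rewrite smulBl /ssub; have := Emn m n.
  by rewrite (BaDegLt_adeg_lt BR) // (BaDegLt_adeg_lt BR') // !addr0 => ->; rewrite subrr.
have EQ : Q' = Q.
  apply: ser_ext => m n; apply/eqP; rewrite -subr_eq0; apply/eqP.
  exact: (congr1 (fun Z : ser => Z m n) QQ).
split=> //; apply: ser_ext => m n.
by apply: (@addrI _ (smul Q (Pprod lam Ss k) m n)); rewrite Emn EQ.
Qed.

Theorem theorem1p2p4 (k : nat) (lam : nat -> CC) (Ss : nat -> ser)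
  (HS : forall i, (i < k)%N -> invB (Ss i)) (X : ser) (HX : Aconv X) :
  exists (Q R : ser),
    (Aconv Q /\ BaDegLt k R /\ X = sadd (smul Q (Pprod lam Ss k)) R) /\
    forall (Q' R' : ser), Aconv Q' -> BaDegLt k R' ->
      X = sadd (smul Q' (Pprod lam Ss k)) R' -> Q' = Q /\ R' = R.
Proof.
have [Q [R [AQ [BR EX]]]] := Pprod_div_exists lam HS HX.
exists Q, R; split=> // Q' R' _ BR' EX'.
exact: Pprod_div_unique HS BR BR' (etrans (esym EX) EX').
Qed.
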